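(* Assume (L): for any $\delta,\varepsilon>0$ and compact $K\subset E$ there are $N>0$, $p>0$ such that for all $n\ge N$ and $x\in K$, $\mathbb P^x\{|\frac1{n\delta}\int_0^{n\delta}f(X_s)ds-\mu(f)|>\varepsilon\}\le e^{-pn\delta}$. Then for any $\varepsilon>0$ and compact $K\subset E$ there are $S>0$, $C>0$, $\rho>0$ such that for all $t\ge S$ and $x\in K$, $$\mathbb P^x\Big\{\sup_{s\ge t}\Big|\frac1s\int_0^sf(X_u)du-\mu(f)\Big|>\varepsilon\Big\}\le Ce^{-\rho t}.$$
   Context: $E$ is a locally compact separable metric space in which every closed ball is compact. $(X_t)$ is a right-continuous time-homogeneous (standard) Markov process on $E$ with laws $\mathbb P^x$, satisfying the weak Feller property and ergodicity (a unique probability measure $\mu$ with $\|P_t(x,\cdot)-\mu\|_{TV}\to0$ for all $x$, $P_t(x,\cdot)$ the transition probabilities); $\mu(f)=\int f\,d\mu$. $f:E\to\mathbb R$ is continuous and bounded. *)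

From HB Require Import structures.
From mathcomp Require Import all_boot all_order all_algebra.
From mathcomp Require Import all_classical all_reals all_analysis measurable_realfun.
Set Implicit Arguments. Unset Strict Implicit. Unset Printing Implicit Defensive.
Import Order.TTheory GRing.Theory Num.Theory.
Import numFieldNormedType.Exports.
Local Open Scope classical_set_scope.
Local Open Scope ring_scope.

(* Borel sigma-algebra of a topological space, as a measurable type
   (an alias of the carrier E). *)
Notation Borel E := (g_sigma_algebraType (@open E)).

Definition cball {R : realType} {E : pseudoPMetricType R} (x : E) (r : R) :=
  [set y | forall e, r < e -> ball x e y].

Definition good_state_space {R : realType} (E : pseudoPMetricType R) : Prop :=
  [/\ hausdorff_space E,
      locally_compact [set: E],
      (exists D : set E, countable D /\ closure D = [set: E]) &
      (forall (x : E) (r : R), compact (cball x r))].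

Section Markov.
Context {R : realType} {E : pseudoPMetricType R} {d : measure_display}
  {Omega : measurableType d}.
Variables (P : E -> probability Omega R) (X : R -> Omega -> E).

Definition trans (t : R) (x : E) (A : set E) : \bar R := P x (X t @^-1` A).

Definition semigroup (t : R) (g : E -> R) (x : E) : R :=
  fine (\int[P x]_w (g (X t w))%:E)%E.

Definition tv_dist (t : R) (x : E) (mu : probability (Borel E) R) : R :=
  sup [set r | exists A : set E, measurable (A : set (Borel E)) /\
         r = `| fine (trans t x A) - fine (mu A) |].

(* (X_t) is a right-continuous time-homogeneous Markov process with laws P^x
   (Markov property w.r.t. the natural filtration, in finite-dimensional form) *)
Definition right_continuous_Markov : Prop :=
  [/\ (forall t, 0 <= t -> measurable_fun [set: Omega] (X t : Omega -> Borel E)),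
      (forall w t, 0 <= t -> (X ^~ w) x @[x --> t^'+] --> X t w),
      (forall x : E, P x [set w | X 0 w = x] = 1%E),
      (forall t (A : set E), 0 <= t -> measurable (A : set (Borel E)) ->
          measurable_fun [set: Borel E] (fun y : Borel E => trans t y A)) &
      (forall (x : E) (t s : R) (n : nat) (u : 'I_n -> R) (A : 'I_n -> set E)
              (B : set E),
          0 <= t -> 0 <= s -> (forall i, 0 <= u i <= t) ->
          (forall i, measurable (A i : set (Borel E))) ->
          measurable (B : set (Borel E)) ->
          P x ([set w | forall i, A i (X (u i) w)] `&` (X (t + s) @^-1` B)) =
          (\int[P x]_(w in [set w | forall i, A i (X (u i) w)])
              trans s (X t w) B)%E)].

Definition weak_Feller : Prop :=
  forall t (g : E -> R), 0 <= t -> continuous g ->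
    (exists M, forall y, `|g y| <= M) -> continuous (semigroup t g).

Definition ergodic_with (mu : probability (Borel E) R) : Prop :=
  forall x : E, tv_dist t x mu @[t --> +oo] --> 0.

Definition time_avg (f : E -> R) (s : R) (w : Omega) : R :=
  (Rintegral (@lebesgue_measure R) `[0, s] (fun u => f (X u w))) / s.

End Markov.

Definition mean {R : realType} {E : pseudoPMetricType R}
  (mu : probability (Borel E) R) (f : E -> R) : R :=
  Rintegral mu [set: Borel E] f.

From HB Require Import structures.
From mathcomp Require Import all_boot all_order all_algebra.
From mathcomp Require Import all_classical all_reals all_analysis measurable_realfun.
From mathcomp Require Import ring lra.
Set Implicit Arguments. Unset Strict Implicit. Unset Printing Implicit Defensive.
Import Order.TTheory GRing.Theory Num.Theory.
Import numFieldNormedType.Exports.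
Local Open Scope classical_set_scope.
Local Open Scope ring_scope.

(* As |f| <= M, the time average at s differs from the one at the integer time floor s
   by at most 2M/s.  So for t >= 4M/eps, a deviation beyond eps at some s >= t forces a
   deviation beyond eps/2 at some integer time n >= floor t; (L) with delta = 1 bounds each
   of these by e^{-pn}, and the geometric tail sums to C e^{-pt}.  The event is measurable
   because the averages are Lipschitz in time, so the supremum may be taken over rational
   times, and each average is measurable in w as a limit of Riemann sums of the
   right-continuous paths. *)

Section BoundedRintegral.
Context {d} {T : measurableType d} {R : realType}.
Context {mu : {measure set T -> \bar R}} {D : set T}.

Lemma bounded_integrable (h : T -> R) (B : R) :
  measurable D -> (mu D < +oo)%E -> measurable_fun D h ->
  (forall x, D x -> `|h x| <= B) -> mu.-integrable D (EFin \o h).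
Proof.
move=> mD muD mh hB; apply: measurable_bounded_integrable => //.
exists B; split; first exact: num_real.
by move=> M BM x Dx /=; exact: (le_trans (hB x Dx) (ltW BM)).
Qed.

Lemma normr_Rintegral_le (h : T -> R) (B : R) :
  measurable D -> (mu D < +oo)%E -> measurable_fun D h ->
  (forall x, D x -> `|h x| <= B) -> `|Rintegral mu D h| <= B * fine (mu D).
Proof.
move=> mD muD mh hB.
have h_int := bounded_integrable mD muD mh hB.
apply: le_trans; first exact: le_normr_Rintegral.
rewrite -Rintegral_cst //; apply: le_Rintegral => //.
- apply: (bounded_integrable (B := B)) => //; first exact: measurableT_comp mh.
  by move=> x Dx; rewrite normr_id hB.
- by apply: (bounded_integrable (B := `|B|)) => // x _ /=; rewrite normr_id.
Qed.

Lemma Rintegral_cvg_bounded (h_ : nat -> T -> R) (g : T -> R) (B : R) :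
  measurable D -> (mu D < +oo)%E ->
  (forall n, measurable_fun D (h_ n)) -> measurable_fun D g ->
  (forall x, D x -> h_ ^~ x @ \oo --> g x) ->
  (forall n x, D x -> `|h_ n x| <= B) ->
  Rintegral mu D (h_ n) @[n --> \oo] --> Rintegral mu D g.
Proof.
move=> mD muD mh mg hg hB.
have hg_ae : {ae mu, forall x, D x -> (EFin \o h_ n) x @[n --> \oo] --> (EFin \o g) x}.
  by apply: aeW => x Dx; apply: cvg_EFin; [exact: nearW | exact: hg].
have B_int : mu.-integrable D (EFin \o cst `|B|).
  by apply: (bounded_integrable (B := `|B|)) => // x _ /=; rewrite normr_id.
have hB_ae : {ae mu, forall x n, D x -> (`|(EFin \o h_ n) x| <= (EFin \o cst `|B|%R) x)%E}.
  by apply: aeW => x n Dx /=; rewrite lee_fin (le_trans (hB n x Dx)) ?ler_norm.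
have [g_int _] := dominated_convergence mD
  (fun n => proj2 (measurable_EFinP _ _) (mh n)) (proj2 (measurable_EFinP _ _) mg)
  hg_ae B_int hB_ae.
rewrite -(fineK (integrable_fin_num mD g_int)) => /fine_cvg; exact.
Qed.

Lemma Rintegral_sum (I : Type) (s : seq I) (h : I -> T -> R) :
  measurable D -> (forall i, mu.-integrable D (EFin \o h i)) ->
  Rintegral mu D (fun x => \sum_(i <- s) h i x) = \sum_(i <- s) Rintegral mu D (h i).
Proof.
move=> mD h_int; elim: s => [|i s IH].
  by under eq_Rintegral do rewrite big_nil; rewrite Rintegral_cst // mul0r big_nil.
under eq_Rintegral do rewrite big_cons.
rewrite RintegralD // ?IH ?big_cons //.
have -> : EFin \o (fun x => \sum_(j <- s) h j x) = (fun x => \sum_(j <- s) (EFin \o h j) x)%E.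
  by apply/funext => x; rewrite /= sumEFin.
exact: integrable_sum.
Qed.

End BoundedRintegral.

Section IntervalLength.
Context {R : realType}.
Local Notation mu := (@lebesgue_measure R).

Lemma lebesgue_measure_itv_lty (x y : bool) (a b : R) :
  (mu [set` Interval (BSide x a) (BSide y b)] < +oo)%E.
Proof. by rewrite lebesgue_measure_itv/=; case: ifP => _; rewrite -?EFinD ?ltry. Qed.

Lemma fine_lebesgue_measure_itv (x y : bool) (a b : R) : a <= b ->
  fine (mu [set` Interval (BSide x a) (BSide y b)]) = b - a.
Proof.
move=> ab; rewrite lebesgue_measure_itv /=; case: ifPn => // ab'.
suff -> : b = a by rewrite subrr.
by apply/eqP; rewrite eq_le ab andbT leNgt; apply: contra ab'; rewrite lte_fin.
Qed.

End IntervalLength.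

Section GridStep.
Context {R : realType}.
Local Notation mu := (@lebesgue_measure R).

Definition grid_cell (n k : nat) : set R :=
  `](k%:R - 1) / n.+1%:R, k%:R / n.+1%:R].

Definition grid_size (s : R) (n : nat) : nat := (n.+1 * (Num.truncn s).+1).+1.

(* Sampling at the right endpoint of each cell is what lets right-continuity suffice. *)
Definition grid_step (g : R -> R) (s : R) (n : nat) (u : R) : R :=
  \sum_(k < grid_size s n) g (k%:R / n.+1%:R) * \1_(grid_cell n k) u.

Lemma grid_cell_uniq n j k u : grid_cell n j u -> grid_cell n k u -> j = k.
Proof.
rewrite /grid_cell /= !in_itv /= => /andP[j1 j2] /andP[k1 k2].
have n_gt0 : 0 < n.+1%:R^-1 :> R by rewrite invr_gt0 ltr0n.
have := lt_le_trans j1 k2; have := lt_le_trans k1 j2.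
rewrite !ltr_pM2r // !ltrBlDr !natr1 !ltr_nat !ltnS => kj jk.
by apply/eqP; rewrite eqn_leq jk kj.
Qed.

Lemma grid_stepE g s n u : 0 <= u <= s ->
  exists k : nat, [/\ (k < grid_size s n)%N, grid_cell n k u &
                      grid_step g s n u = g (k%:R / n.+1%:R)].
Proof.
move=> /andP[u0 us]; set v := n.+1%:R * u.
have v0 : 0 <= v by rewrite mulr_ge0.
set k := `|Num.ceil v|%N.
have kE : k%:R = (Num.ceil v)%:~R :> R.
  rewrite /k natr_absz; congr intmul; apply: gez0_abs.
  by rewrite ceil_ge0 (lt_le_trans _ v0) // ltrN10.
have /andP[vk1 vk2] := ceil_itv v; rewrite intrB mulr1z -kE in vk1; rewrite -kE in vk2.
have k_lt : (k < grid_size s n)%N.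
  rewrite /grid_size ltnS.
  have v_le : v <= (n.+1 * (Num.truncn s).+1)%:R.
    rewrite natrM /v ler_pM2l ?ltr0n // (le_trans us) // ltW //.
    by rewrite -truncn_le_nat leqnn.
  by move: (lt_le_trans vk1 v_le); rewrite ltrBlDr natr1 ltr_nat ltnS.
have k_cell : grid_cell n k u.
  by rewrite /grid_cell /= in_itv /= ltr_pdivrMr ?ler_pdivlMr ?ltr0n // ![u * _]mulrC vk1 vk2.
exists k; split => //.
rewrite /grid_step (bigD1 (Ordinal k_lt)) //= big1 ?addr0 => [|j jk].
  by rewrite indicE mem_set // mulr1.
rewrite indicE memNset ?mulr0 // => j_cell.
by move/eqP: jk; apply; apply/val_inj; exact: grid_cell_uniq j_cell k_cell.
Qed.

Lemma measurable_grid_step g s n : measurable_fun [set: R] (grid_step g s n).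
Proof.
apply: measurable_sum => k; apply: measurable_funM; first exact: measurable_cst.
by apply: measurable_indic; exact: measurable_itv.
Qed.

Lemma Rintegral_grid_step g s n :
  Rintegral mu `[0, s] (grid_step g s n) =
  \sum_(k < grid_size s n) g (k%:R / n.+1%:R) * Rintegral mu `[0, s] \1_(grid_cell n k).
Proof.
have mcell k : measurable_fun `[0, s] (\1_(grid_cell n k) : R -> R).
  by apply: measurable_indic; exact: measurable_itv.
have normr_indic k u : `|\1_(grid_cell n k) u| <= 1 :> R.
  by rewrite indicE; case: (_ \in _); rewrite ?normr1 ?normr0.
rewrite Rintegral_sum //.
  apply: eq_bigr => k _; rewrite RintegralZl //.
  apply: (bounded_integrable (B := 1)) => //; first exact: lebesgue_measure_itv_lty.
  exact: mcell.
move=> k; apply: (bounded_integrable (B := `|g (k%:R / n.+1%:R)|)) => //.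
- exact: lebesgue_measure_itv_lty.
- by apply: measurable_funM; [exact: measurable_cst | exact: mcell].
- by move=> u _; rewrite normrM ler_piMr.
Qed.

Section RightContinuous.
Variables (g : R -> R) (M : R).
Hypotheses (g_bound : forall u, `|g u| <= M)
  (g_rc : forall u, 0 <= u -> g x @[x --> u^'+] --> g u).

Lemma grid_step_cvg (s u : R) : 0 <= u <= s -> grid_step g s n u @[n --> \oo] --> g u.
Proof.
move=> us; have u0 : 0 <= u by case/andP: us.
apply/cvgrPdist_lt => e e0.
move/cvgrPdist_lt: (g_rc u0) => /(_ e e0) /nbhs_ballP[r /= r0 near_u].
near=> n.
have [k [_ + ->]] := grid_stepE g n us.
rewrite /grid_cell /= in_itv /= mulrBl mul1r => /andP[k1 k2].
have [<-|uk] := eqVneq (k%:R / n.+1%:R) u; first by rewrite subrr normr0.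
have mesh_lt : n.+1%:R^-1 < r by near: n; exact: near_infty_natSinv_lt (PosNum r0).
apply: near_u; last by rewrite lt_neqAle eq_sym uk k2.
move: k1 k2 mesh_lt; rewrite /ball /= distrC.
set x := k%:R / _; set mesh := n.+1%:R^-1 => k1 k2 mesh_lt.
by rewrite ger0_norm ?subr_ge0 //; lra.
Unshelve. all: by end_near.
Qed.

Lemma measurable_right_continuous (s : R) : measurable_fun `[0, s] g.
Proof.
apply: (measurable_fun_cvg (h := grid_step g s)).
  by move=> n; exact: measurable_funTS (measurable_grid_step g s n).
by move=> u; rewrite /= in_itv /= => us; exact: grid_step_cvg.
Qed.

Lemma Rintegral_grid_step_cvg (s : R) :
  Rintegral mu `[0, s] (grid_step g s n) @[n --> \oo] --> Rintegral mu `[0, s] g.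
Proof.
apply: (@Rintegral_cvg_bounded _ _ _ _ _ _ _ M) => //.
- exact: lebesgue_measure_itv_lty.
- by move=> n; exact: measurable_funTS (measurable_grid_step g s n).
- exact: measurable_right_continuous.
- by move=> u; rewrite /= in_itv /= => us; exact: grid_step_cvg.
- by move=> n u; rewrite /= in_itv /= => us; have [k [_ _ ->]] := grid_stepE g n us.
Qed.

End RightContinuous.
End GridStep.

Section PrimitiveBounds.
Context {R : realType}.
Local Notation mu := (@lebesgue_measure R).
Variables (g : R -> R) (M : R).
Hypothesis g_bound : forall u, `|g u| <= M.

Lemma normr_Rintegral_itv0_le (a : R) : 0 <= a -> measurable_fun `[0, a] g ->
  `|Rintegral mu `[0, a] g| <= M * a.
Proof.
move=> a0 mg.
rewrite -[X in M * X](subr0 a) -(@fine_lebesgue_measure_itv R true false 0 a a0).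
by apply: normr_Rintegral_le => //; exact: lebesgue_measure_itv_lty.
Qed.

Lemma normr_Rintegral_itv0B_le (a b : R) : 0 <= a -> a <= b -> measurable_fun `[0, b] g ->
  `|Rintegral mu `[0, b] g - Rintegral mu `[0, a] g| <= M * (b - a).
Proof.
move=> a0 ab mg.
have itvE : `[0, b]%classic = `[0, a]%classic `|` `]a, b]%classic :> set R.
  by apply: itv_bndbnd_setU; rewrite bnd_simp.
have g_int : mu.-integrable (`[0, a] `|` `]a, b]) (EFin \o g).
  rewrite -itvE; apply: (bounded_integrable (B := M)) => //.
  exact: lebesgue_measure_itv_lty.
rewrite [in X in `|X - _|]itvE Rintegral_setU //; last first.
  apply/eqP; rewrite -subset0 => x [] /=; rewrite !in_itv /= => /andP[_ xa] /andP[ax _].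
  by move: (lt_le_trans ax xa); rewrite ltxx.
rewrite addrC addKr -(@fine_lebesgue_measure_itv R false false a b ab).
apply: normr_Rintegral_le => //; first exact: lebesgue_measure_itv_lty.
by apply: measurable_funS mg => //; rewrite itvE; exact: subsetUr.
Qed.

End PrimitiveBounds.

Section AverageLipschitz.
Context {R : realType}.
Variables (I : R -> R) (M : R).
Hypotheses (I_lip : forall a b, 0 <= a -> a <= b -> `|I b - I a| <= M * (b - a))
  (I_bound : forall a, 0 <= a -> `|I a| <= M * a).

Lemma dist_avg_le (a b : R) : 0 < a -> a <= b ->
  `|I b / b - I a / a| <= 2 * M * (b - a) / b.
Proof.
move=> a0 ab; have b0 : 0 < b := lt_le_trans a0 ab.
have ba0 : 0 <= b - a by rewrite subr_ge0.
have -> : I b / b - I a / a = (a * (I b - I a) - (b - a) * I a) / (a * b).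
  by field; rewrite !gt_eqF.
rewrite normrM normfV (ger0_norm (ltW (mulr_gt0 a0 b0))) ler_pdivrMr ?mulr_gt0 //.
apply: (le_trans (ler_normB _ _)).
have -> : 2 * M * (b - a) / b * (a * b) = a * (M * (b - a)) + (b - a) * (M * a).
  by field; rewrite gt_eqF.
rewrite !normrM (ger0_norm (ltW a0)) (ger0_norm ba0).
by apply: lerD; apply: ler_wpM2l => //;
  [exact: ltW | exact: I_lip (ltW a0) ab | exact: I_bound (ltW a0)].
Qed.

Lemma dist_avg_le_lower (t a b : R) : 0 <= M -> 0 < t -> t <= a -> t <= b ->
  `|I b / b - I a / a| <= 2 * M / t * `|b - a|.
Proof.
move=> M0 t0.
wlog ab : a b / a <= b => [hwlog ta tb|ta tb].
  by case: (leP a b) => [|/ltW] ab; [|rewrite distrC (distrC b)]; exact: hwlog.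
apply: (le_trans (dist_avg_le (lt_le_trans t0 ta) ab)).
rewrite ger0_norm ?subr_ge0 // mulrAC ler_wpM2r ?subr_ge0 // ler_wpM2l ?mulr_ge0 //.
by rewrite lef_pV2 ?posrE // (lt_le_trans t0) // (le_trans ta).
Qed.

End AverageLipschitz.

Lemma continuous_measurable_Borel {R : realType} {E : pseudoPMetricType R} (f : E -> R) :
  continuous f -> measurable_fun [set: Borel E] (f : Borel E -> R).
Proof.
move=> cf; apply: (measurability _ (RGenOInfty.measurableE R)) => //.
move=> _ [_ [x ->] <-]; rewrite setTI; apply: sub_sigma_algebra.
by move/continuousP: cf; apply; exact: interval_open.
Qed.

Section PathAverage.
Context {R : realType} {E : pseudoPMetricType R} {d : measure_display}
  {Omega : measurableType d}.
Local Notation mu := (@lebesgue_measure R).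
Variables (X : R -> Omega -> E) (f : E -> R) (M : R).
Hypotheses (mX : forall t, 0 <= t -> measurable_fun [set: Omega] (X t : Omega -> Borel E))
  (X_rc : forall w t, 0 <= t -> (X ^~ w) x @[x --> t^'+] --> X t w)
  (f_cont : continuous f) (f_bound : forall y, `|f y| <= M) (M_ge0 : 0 <= M).

Let path_rc w (u : R) : 0 <= u -> (fun u => f (X u w)) x @[x --> u^'+] --> f (X u w).
Proof. by move=> u0; exact: cvg_comp _ _ (X_rc u0) (@f_cont (X u w)). Qed.

Let path_measurable w (s : R) : measurable_fun `[0, s] (fun u => f (X u w)).
Proof. exact: (@measurable_right_continuous _ _ (@path_rc w) s). Qed.

Lemma measurable_time_avg s : measurable_fun [set: Omega] (time_avg X f s).
Proof.
apply: measurable_funM; last exact: measurable_cst.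
pose riemann n w := \sum_(k < grid_size s n) f (X (k%:R / n.+1%:R) w) *
  Rintegral mu `[0, s] \1_(grid_cell n k).
apply: (measurable_fun_cvg (h := riemann)) => [n|w _].
  apply: measurable_sum => k; apply: measurable_funM; last exact: measurable_cst.
  apply: measurableT_comp (continuous_measurable_Borel f_cont) (mX _).
  by rewrite divr_ge0.
have := @Rintegral_grid_step_cvg _ _ _ (fun u => f_bound _) (@path_rc w) s.
by under eq_fun do rewrite Rintegral_grid_step.
Qed.

Let path_int w (s : R) := Rintegral mu `[0, s] (fun u => f (X u w)).

Let path_intB w (a b : R) : 0 <= a -> a <= b ->
  `|path_int w b - path_int w a| <= M * (b - a).
Proof. by move=> a0 ab; apply: (normr_Rintegral_itv0B_le (fun y => f_bound _)). Qed.

Let path_int_bound w (a : R) : 0 <= a -> `|path_int w a| <= M * a.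
Proof. by move=> a0; apply: (normr_Rintegral_itv0_le (fun y => f_bound _)). Qed.

Lemma time_avg_lipschitz w (t a b : R) : 0 < t -> t <= a -> t <= b ->
  `|time_avg X f b w - time_avg X f a w| <= 2 * M / t * `|b - a|.
Proof. exact: (dist_avg_le_lower (@path_intB w) (@path_int_bound w)). Qed.

Lemma time_avg_truncn w (s : R) : 1 <= s ->
  `|time_avg X f s w - time_avg X f (Num.truncn s)%:R w| <= 2 * M / s.
Proof.
move=> s1; have s0 : 0 < s := lt_le_trans ltr01 s1.
have n_gt0 : 0 < (Num.truncn s)%:R :> R by rewrite ltr0n truncn_gt0.
have n_le : (Num.truncn s)%:R <= s by rewrite truncn_le ltW.
apply: (le_trans (dist_avg_le (@path_intB w) (@path_int_bound w) n_gt0 n_le)).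
rewrite ler_pM2r ?invr_gt0 // ler_piMr ?mulr_ge0 //.
by rewrite lerBlDl natr1 ltW // -truncn_le_nat.
Qed.

End PathAverage.

Lemma nneseries_expR_tail_le {R : realType} (p t : R) : 0 < p -> 0 <= t ->
  (\sum_(0 <= i <oo) (expR (- (p * (i + Num.truncn t)%:R)))%:E <=
   (expR p / (1 - expR (- p)) * expR (- (p * t)))%:E)%E.
Proof.
move=> p0 t0; set n0 := Num.truncn t; set a := expR (- (p * n0%:R)); set z := expR (- p).
have z_lt1 : z < 1 by rewrite expR_lt1 oppr_lt0.
have z_gt0 : 0 < z := expR_gt0 _.
have termE i : expR (- (p * (i + n0)%:R)) = a * z ^+ i.
  by rewrite natrD mulrDr opprD expRD -expRM_natr mulrC mulNr.
apply: (@le_trans _ _ (a / (1 - z))%:E).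
  under eq_eseriesr do rewrite termE.
  apply: lime_le.
    by apply: is_cvg_nneseries => i _; rewrite lee_fin mulr_ge0 ?expR_ge0 // exprn_ge0 // ltW.
  apply: nearW => k /=; rewrite sumEFin lee_fin.
  have -> : \sum_(0 <= i < k) a * z ^+ i = a * (1 - z ^+ k) / (1 - z).
    by have := congr1 (fun u => u k) (geometric_seriesE a (negbT (lt_eqF z_lt1))).
  rewrite ler_pM2r ?invr_gt0 ?subr_gt0 // ger_pMr ?expR_gt0 //.
  by rewrite gerBl exprn_ge0 // ltW.
rewrite lee_fin /a /z mulrAC -expRD ler_pM2r ?invr_gt0 ?subr_gt0 // ler_expR.
have : t < n0.+1%:R by rewrite -truncn_le_nat.
by rewrite -natr1 => ?; nra.
Qed.

Section TailSup.
Context {R : realType} {d : measure_display} {Omega : measurableType d}.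
Variables (A : R -> Omega -> R) (m : R).

Definition tail_sup_dev (t : R) (w : Omega) : \bar R :=
  ereal_sup [set (`|A s w - m|)%:E | s in [set s | t <= s]].

Lemma measurable_normrB_gt (e s : R) : measurable_fun [set: Omega] (A s) ->
  measurable [set w | e < `|A s w - m|].
Proof.
move=> mA; have mdist : measurable_fun [set: Omega] (fun w => `|A s w - m|).
  apply: measurableT_comp (@normr_measurable R setT) _.
  by apply: measurable_funB => //; exact: measurable_cst.
rewrite -[X in measurable X]setTI -preimage_itvoy.
exact: mdist measurableT _ (measurable_itv _).
Qed.

Section Lipschitz.
Variables (t L : R).
Hypotheses (L_ge0 : 0 <= L)
  (A_lip : forall w a b, t <= a -> t <= b -> `|A b w - A a w| <= L * `|b - a|).

Lemma rat_time_dev_gt (eps s : R) w : t <= s -> eps < `|A s w - m| ->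
  exists q : rat, eps < `|A (t + `|ratr q|) w - m|.
Proof.
move=> ts s_gt; pose eta := `|A s w - m| - eps.
have eta_gt0 : 0 < eta by rewrite subr_gt0.
have L1_gt0 : 0 < L + 1 := ltr_wpDl L_ge0 ltr01.
have [r [r_near [q _ qr]]] : exists r, (ball (s - t) (eta / (L + 1)) `&` range ratr) r.
  apply: dense_rat; last exact: ball_open.
  by exists (s - t); apply: ballxx; rewrite divr_gt0.
exists q; rewrite qr.
have dist_lt : `|t + `|r| - s| < eta / (L + 1).
  have -> : t + `|r| - s = `|r| - `|s - t| by rewrite (@ger0_norm _ (s - t)) ?subr_ge0 //; ring.
  by apply: le_lt_trans (ler_dist_dist _ _) _; rewrite distrC.
have t_le : t <= t + `|r| by rewrite lerDl.
have := A_lip w ts t_le; rewrite distrC => A_near.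
have := ler_distD (A (t + `|r|) w) (A s w) m.
have : L * `|t + `|r| - s| < eta.
  apply: le_lt_trans (ler_wpM2l L_ge0 (ltW dist_lt)) _.
  by rewrite mulrA ltr_pdivrMr //; nra.
rewrite /eta; lra.
Qed.

Lemma measurable_tail_sup_dev_gt (eps : R) :
  (forall s, measurable_fun [set: Omega] (A s)) ->
  measurable [set w | (eps%:E < tail_sup_dev t w)%E].
Proof.
move=> mA; suff -> : [set w | (eps%:E < tail_sup_dev t w)%E] =
    \bigcup_(q : rat) [set w | eps < `|A (t + `|ratr q|) w - m|].
  by apply: bigcupT_measurable_rat => q; exact: measurable_normrB_gt.
apply/seteqP; split => w /=.
  move=> /ereal_sup_gtP[y [s ts <-]]; rewrite lte_fin => s_gt.
  by have [q q_gt] := rat_time_dev_gt ts s_gt; exists q.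
move=> [q _ q_gt]; apply/ereal_sup_gtP; exists (`|A (t + `|ratr q|) w - m|)%:E.
  by exists (t + `|ratr q|); rewrite //= lerDl.
by rewrite lte_fin.
Qed.

End Lipschitz.

Lemma tail_sup_dev_gt_sub (eps t : R) : 0 <= t ->
  (forall w s, t <= s -> `|A s w - A (Num.truncn s)%:R w| <= eps / 2) ->
  [set w | (eps%:E < tail_sup_dev t w)%E] `<=`
  \bigcup_i [set w | eps / 2 < `|A (i + Num.truncn t)%:R w - m|].
Proof.
move=> t0 A_truncn w /ereal_sup_gtP[y [s ts <-]]; rewrite lte_fin => s_gt.
exists (Num.truncn s - Num.truncn t)%N => //=; rewrite subnK ?le_truncn //.
have := A_truncn w s ts; have := ler_distD (A (Num.truncn s)%:R w) (A s w) m.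
lra.
Qed.

Lemma measure_tail_sup_dev_gt_le (P : {measure set Omega -> \bar R}) (eps t L p : R) :
  0 < p -> 0 <= t -> 0 <= L ->
  (forall s, measurable_fun [set: Omega] (A s)) ->
  (forall w a b, t <= a -> t <= b -> `|A b w - A a w| <= L * `|b - a|) ->
  (forall w s, t <= s -> `|A s w - A (Num.truncn s)%:R w| <= eps / 2) ->
  (forall n, (Num.truncn t <= n)%N ->
     (P [set w | (eps / 2 < `|A n%:R w - m|)%R] <= (expR (- (p * n%:R)))%:E)%E) ->
  (P [set w | (eps%:E < tail_sup_dev t w)%E] <=
   (expR p / (1 - expR (- p)) * expR (- (p * t)))%:E)%E.
Proof.
move=> p0 t0 L0 mA A_lip A_truncn A_int.
have sup_meas := measurable_tail_sup_dev_gt L0 A_lip eps mA.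
apply: (le_trans (measure_sigma_subadditive P _ sup_meas (tail_sup_dev_gt_sub t0 A_truncn))).
  by move=> i; exact: measurable_normrB_gt.
apply: le_trans (nneseries_expR_tail_le p0 t0).
apply: lee_nneseries => [i _ _|i _]; first exact: measure_ge0.
exact/A_int/leq_addl.
Qed.

End TailSup.

Theorem lemma2p24 (R : realType) (E : pseudoPMetricType R)
  (d : measure_display) (Omega : measurableType d)
  (P : E -> probability Omega R) (X : R -> Omega -> E)
  (mu : probability (Borel E) R) (f : E -> R) :
  good_state_space E ->
  right_continuous_Markov P X ->
  weak_Feller P X ->
  ergodic_with P X mu ->
  continuous f -> (exists M, forall y, `|f y| <= M) ->
  (* assumption (L) *)
  (forall (delta eps : R) (K : set E), 0 < delta -> 0 < eps -> compact K ->
     exists (N : nat) (p : R), (0 < N)%N /\ 0 < p /\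
       forall (n : nat) (x : E), (N <= n)%N -> K x ->
         (P x [set w | (eps < `| time_avg X f (n%:R * delta) w - mean mu f |)%R]
           <= (expR (- (p * n%:R * delta))%R)%:E)%E) ->
  forall (eps : R) (K : set E), 0 < eps -> compact K ->
    exists (S C rho : R), [/\ 0 < S, 0 < C & 0 < rho] /\
      forall (t : R) (x : E), S <= t -> K x ->
        (P x [set w | eps%:E < ereal_sup
            [set (`| time_avg X f s w - mean mu f |)%R%:E | s in [set s | (t <= s)%R]]]
          <= (C * expR (- (rho * t)))%R%:E)%E.
Proof.
move=> _ [mX X_rc _ _ _] _ _ f_cont [M0 f_bound0] L eps K eps0 cK.
pose M := `|M0| + 1; have M_gt0 : 0 < M by rewrite ltr_wpDl.
have M_ge0 := ltW M_gt0.
have f_bound y : `|f y| <= M.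
  by rewrite (le_trans (f_bound0 y)) // (le_trans (ler_norm M0)) // lerDl.
have [N [p [_ [p0 L_half]]]] := L 1 (eps / 2) K ltr01 (divr_gt0 eps0 (ltr0Sn _ 1)) cK.
have ME_gt0 : 0 < 4 * M / eps by rewrite divr_gt0 ?mulr_gt0.
have N_ge0 : 0 <= N%:R :> R by [].
exists (N%:R + 1 + 4 * M / eps), (expR p / (1 - expR (- p))), p; split.
  split => //; first lra.
  by rewrite divr_gt0 ?expR_gt0 // subr_gt0 expR_lt1 oppr_lt0.
move=> t x St Kx; have t1 : 1 <= t by lra.
have M_s s : t <= s -> 2 * M / s <= eps / 2.
  move=> ts; have s_gt0 : 0 < s by lra.
  have : 4 * M / eps <= s by lra.
  by rewrite !ler_pdivrMr // mulrAC ler_pdivlMr //; nra.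
have N_le : (N <= Num.truncn t)%N by rewrite truncn_ge_nat; lra.
apply: (measure_tail_sup_dev_gt_le (A := time_avg X f) (L := 2 * M / t)) => //.
- lra.
- by rewrite divr_ge0 ?mulr_ge0 //; lra.
- exact: measurable_time_avg mX X_rc f_cont f_bound.
- move=> w a b ta tb; have t_gt0 : 0 < t by lra.
  by have := time_avg_lipschitz X_rc f_cont f_bound M_ge0 w t_gt0 ta tb.
- move=> w s ts; apply: le_trans (M_s s ts).
  by have := time_avg_truncn X_rc f_cont f_bound M_ge0 w (le_trans t1 ts).
- move=> n Nn; have := L_half n x (leq_trans N_le Nn) Kx.
  by rewrite !mulr1.
Qed.
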